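(* Let $q$ be a power of an odd prime $p$, let $L(x)$ be an $\mathbb{F}_q$-linearized polynomial, and let $C$ denote the curve $y^q-y=xL(x)$. Let $n\ge1$ and let $\ell$ be a prime with $\gcd(\ell,2p)=1$. If $\lambda_n(C)\neq 0$ and $\lambda_{n\ell}(C)\neq 0$, then $$\lambda_n(C)\equiv \lambda_{n\ell}(C)\, q^{\frac{n(\ell-1)+w_{n\ell}(C)-w_n(C)}{2}} \pmod{\ell}.$$
   Context: An $\mathbb{F}_q$-linearized polynomial is $L(x)=\sum_i c_i x^{q^i}$ with $c_i\in\mathbb{F}_q$. For $m\ge1$, let $Q_m(x)=\mathrm{Tr}_{\mathbb{F}_{q^m}/\mathbb{F}_q}(xL(x))$, a quadratic form over $\mathbb{F}_q$ on $\mathbb{F}_{q^m}$; its radical is $\{x\in\mathbb{F}_{q^m}: Q_m(x+y)-Q_m(x)-Q_m(y)=0\ \forall y\in\mathbb{F}_{q^m}\}$ and $w_m(C)$ denotes its $\mathbb{F}_q$-dimension. The sign $\lambda_m(C)\in\{-1,0,1\}$ is defined by $\#\{x\in\mathbb{F}_{q^m}:Q_m(x)=0\}=q^{m-1}+\lambda_m(C)(q-1)q^{\frac{m+w_m(C)}{2}-1}$; equivalently $\#C(\mathbb{F}_{q^m})=q^m+1+\lambda_m(C)(q-1)q^{\frac{m+w_m(C)}{2}}$. One has $\lambda_m(C)=0$ iff $m-w_m(C)$ is odd. *)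

From HB Require Import structures.
From mathcomp Require Import all_boot all_order all_algebra all_field.
Set Implicit Arguments. Unset Strict Implicit. Unset Printing Implicit Defensive.
Import GRing.Theory.
Local Open Scope ring_scope.

(* Ambient finite field K (containing F_{q^m} for the relevant m).
   F_{q^m} is realised as the set of x in K with x^(q^m) = x. *)
Definition Fqm (K : finFieldType) (q m : nat) : {set K} :=
  [set x : K | x ^+ (q ^ m) == x].

Definition linpoly (K : finFieldType) (q : nat) (c : seq K) (x : K) : K :=
  \sum_(i < size c) c`_i * x ^+ (q ^ i).

(* Q_m(x) = Tr_{F_{q^m}/F_q}(x L(x)) = sum_{i<m} (x L(x))^(q^i). *)
Definition Qm (K : finFieldType) (q : nat) (c : seq K) (m : nat) (x : K) : K :=
  \sum_(i < m) (x * linpoly q c x) ^+ (q ^ i).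

Definition radicalQ (K : finFieldType) (q : nat) (c : seq K) (m : nat) : {set K} :=
  [set x in Fqm K q m |
     [forall y in Fqm K q m, Qm q c m (x + y) - Qm q c m x - Qm q c m y == 0]].

Definition nzeros (K : finFieldType) (q : nat) (c : seq K) (m : nat) : nat :=
  #|[set x in Fqm K q m | Qm q c m x == 0]|.

(* w is the F_q-dimension of the radical: #radical = q^w. *)
Definition is_w (K : finFieldType) (q : nat) (c : seq K) (m w : nat) : Prop :=
  #|radicalQ q c m| = (q ^ w)%N.

Definition is_lambda (K : finFieldType) (q : nat) (c : seq K) (m w : nat)
    (lam : int) : Prop :=
  (lam \in [:: -1; 0; 1]) /\
  ((nzeros q c m)%:Z = (q ^ m.-1)%N%:Z
      + lam * (q.-1)%:Z * (q ^ ((m + w) %/ 2).-1)%N%:Z).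

(* Let N_m(a) count the x in F_(q^m) with Q_(nl)(x) = a, for a in F_q.  The Frobenius
   x |-> x^(q^n) has order l on F_(q^(nl)), fixes exactly F_(q^n) and preserves Q_(nl),
   so N_(nl)(a) = N_n(a) mod l.  On F_(q^n), Q_(nl) = l Q_n has the same zeros as Q_n.
   Since Q_(nl) is quadratic, N_m(a) depends only on the square class of a != 0, so the
   total q^m and the zero count q^(m-1) + lambda (q-1) q^((m+w)/2-1) determine
   N_m(1) + N_m(nu) = 2 (q^(m-1) - lambda q^((m+w)/2-1)) for a non-square nu.  Comparing
   m = n with m = nl mod l, using q^(nl) = q^n mod l, gives the congruence.  That m + w
   is even when lambda != 0 follows from the second moment sum_a N_m(a)^2, computed
   through the polar form: otherwise q (q - 1) would be a perfect square. *)

From HB Require Import structures.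
From mathcomp Require Import all_boot all_order all_algebra all_field all_fingroup all_solvable.
From mathcomp Require Import ring zify.
Set Implicit Arguments. Unset Strict Implicit. Unset Printing Implicit Defensive.
Import GRing.Theory Num.Theory.
Local Open Scope ring_scope.

Lemma card_expr_fixed (F : finFieldType) d :
  (1 < d)%N -> (d.-1 %| #|F|.-1)%N -> #|[set x : F | x ^+ d == x]| = d.
Proof.
move=> d_gt1 dvd_d.
set P : {poly F} := 'X^d - 'X.
have F_gt1 : (1 < #|F|)%N by rewrite (cardD1 0) (cardD1 1) !inE oner_neq0.
have XnX n : (0 < n)%N -> ('X^n - 'X : {poly F}) = 'X * ('X^(n.-1) - 1).
  by move=> n_gt0; rewrite mulrBr mulr1 -exprS prednK.
have P_dvd : P %| \prod_(x : F) ('X - x%:P).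
  rewrite -finField_genPoly /P XnX ?(ltnW d_gt1) // XnX ?(ltnW F_gt1) //.
  rewrite dvdp_mul2l ?polyX_eq0 //; case/dvdnP: dvd_d => s ->.
  rewrite mulnC exprM -(expr1n _ s) subrXX !expr1n; exact: dvdp_mulr (dvdpp _).
have [msk eqp_P] := dvdp_prod_XsubC P_dvd.
set s := mask msk (index_enum F) in eqp_P.
have s_uniq : uniq s by apply: mask_uniq; apply: index_enum_uniq.
have roots_s : [set x : F | x ^+ d == x] =i s.
  move=> x; rewrite inE -(root_prod_XsubC s x) -(eqp_root eqp_P) /root /P.
  by rewrite !hornerE subr_eq0.
have size_P : size P = d.+1.
  by rewrite /P size_polyDl size_polyXn // size_polyN size_polyX ltnS.
rewrite (eq_card roots_s) (card_uniqP s_uniq).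
by have := eqp_size eqp_P; rewrite size_prod_XsubC size_P; case.
Qed.

(* A prime-order permutation moves the non-fixed points of an invariant set in orbits of size l. *)
Lemma card_fixed_mod_prime (T : finType) (f : T -> T) l (S : {set T}) :
  injective f -> prime l -> (forall x, iter l f x = x) ->
  (forall x, (f x \in S) = (x \in S)) ->
  #|S| = #|[set x in S | f x == x]| %[mod l].
Proof.
move=> f_inj l_pr f_l f_S; pose g := perm f_inj.
have g_exp j x : (g ^+ j)%g x = iter j f x.
  by elim: j x => [|j IHj] x; rewrite ?expg0 ?perm1 // expgSr permM IHj permE.
have lgroup_g : pgroup l <[g]>%g.
  apply: (@pnat_dvd _ l); last exact: pnat_id.
  by rewrite order_dvdn; apply/eqP/permP => x; rewrite g_exp perm1.
have g_acts : [acts <[g]>%g, on S | 'P].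
  by rewrite cycle_subG; apply/astabsP => x /=; rewrite /aperm permE.
rewrite (pgroup_fix_mod lgroup_g g_acts); congr (_ %% _)%N.
apply: eq_card => x; rewrite in_setI afix_cycle !in_set.
by rewrite sub1set in_set /= /aperm permE.
Qed.

Lemma card_dep_pairs (T : finType) (A : {set T}) (R : T -> T -> bool) :
  #|[set z : T * T | (z.1 \in A) && R z.1 z.2]| = (\sum_(x in A) #|[set y | R x y]|)%N.
Proof.
rewrite -sum1dep_card; transitivity (\sum_(x in A) \sum_(y | R x y) 1)%N.
  by rewrite pair_big_dep.
by apply: eq_bigr => x _; rewrite sum1dep_card.
Qed.

Lemma mulpredn_neq_sqr Q E : (1 < Q)%N -> (E * E != Q * Q.-1)%N.
Proof.
move=> Q_gt1; apply/eqP => sqE; case: (ltnP E Q) => [E_lt | E_ge].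
  have : (E * E <= Q.-1 * Q.-1)%N by apply: leq_mul; lia.
  have : (Q.-1 * Q.-1 < Q * Q.-1)%N by rewrite ltn_pmul2r; lia.
  lia.
have : (Q * Q <= E * E)%N by apply: leq_mul.
have : (Q * Q.-1 < Q * Q)%N by rewrite ltn_pmul2l; lia.
lia.
Qed.

(* When m + w = 2 j + 1 this is the right-hand side of [sqr_diff_from_moments]. *)
Lemma sqrz_neq_odd_gap (Q j : nat) (d : int) : (1 < Q)%N ->
  d ^+ 2 != 4 * ((Q ^ j.*2)%N%:Z - Q%:Z * (Q ^ j.-1)%N%:Z ^+ 2).
Proof.
move=> Q_gt1; apply/eqP; case: j => [|j] /= sqd.
  by have := sqr_ge0 d; rewrite sqd expn0 expr1n mulr1; lia.
set P := (Q ^ j)%N in sqd.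
have sqdZ : d ^+ 2 = (((2 * P) * (2 * P)) * (Q * Q.-1))%N%:Z.
  have QP : (Q ^ j.+1.*2 = (Q * P) * (Q * P))%N.
    by rewrite -expnS mulnn -expnM; congr expn; lia.
  rewrite sqd QP expr2 -subn1 !PoszM -subzn; last by lia.
  ring.
have sqdN : (`|d| ^ 2 = (2 * P) ^ 2 * (Q * Q.-1))%N.
  by have := congr1 absz sqdZ; rewrite abszX /= => ->; rewrite !mulnn.
have [E dE] : exists E, `|d|%N = (E * (2 * P))%N.
  by apply/dvdnP; rewrite -(@dvdn_pexp2r _ _ 2) // sqdN dvdn_mulr.
move: sqdN; rewrite dE expnMn mulnC => /eqP.
rewrite eqn_pmul2l ?expn_gt0 ?muln_gt0 ?expn_gt0; last by lia.
by rewrite -mulnn (negbTE (mulpredn_neq_sqr E Q_gt1)).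
Qed.

Lemma sqr_diff_from_moments (R : idomainType) (Q Z X Y lam c0 c1 c2 : R) :
  Q - 1 != 0 -> lam ^+ 2 = 1 ->
  c0 = X + lam * (Q - 1) * Y -> c1 + c2 = 2 * (X - lam * Y) ->
  2 * c0 ^+ 2 + (Q - 1) * (c1 ^+ 2 + c2 ^+ 2) = 2 * (Z * (Q * X) + (Q * X - Z) * X) ->
  (c1 - c2) ^+ 2 = 4 * (Z * X - Q * Y ^+ 2).
Proof.
move=> Q1_neq0 lam2 -> sum12 sqr012; apply: (mulfI Q1_neq0).
have sqr12 : (Q - 1) * (c1 ^+ 2 + c2 ^+ 2) =
    2 * (Z * (Q * X) + (Q * X - Z) * X) - 2 * (X + lam * (Q - 1) * Y) ^+ 2.
  by rewrite -sqr012; ring.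
have -> : (Q - 1) * (c1 - c2) ^+ 2 =
    2 * ((Q - 1) * (c1 ^+ 2 + c2 ^+ 2)) - (Q - 1) * (c1 + c2) ^+ 2 by ring.
apply/eqP; rewrite sqr12 sum12 -subr_eq0.
rewrite [D in D == 0](_ : _ = 4 * Q * (Q - 1) * (1 - lam ^+ 2) * Y ^+ 2).
  by rewrite lam2 subrr mulr0 mul0r.
ring.
Qed.

Lemma half_add_mul_split n l wn wl : (1 < l)%N -> (wn <= n)%N ->
  ~~ odd (n + wn) -> ~~ odd (n * l + wl) ->
  ((n * l + wl) %/ 2 = (n + wn) %/ 2 + (n * (l - 1) + wl - wn) %/ 2)%N.
Proof.
move=> l_gt1 wn_le ev_n ev_nl.
have : (n * 2 <= n * l)%N by rewrite leq_mul2l l_gt1 orbT.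
have := odd_double_half (n + wn); have := odd_double_half (n * l + wl).
by rewrite (negbTE ev_n) (negbTE ev_nl) mulnBr muln1; lia.
Qed.

(* Reduce mod l, cancel 2 q^((n + wn)/2 - 1) and use Fermat's little theorem q^(n l) = q^n. *)
Lemma congr_lambda_of_counts (q l n wn wl : nat) (lamn laml : int) :
  prime l -> coprime l (2 * q) -> (0 < n)%N -> (wn <= n)%N ->
  ~~ odd (n + wn) -> ~~ odd (n * l + wl) ->
  (2 * ((q ^ (n * l).-1)%N%:Z - laml * (q ^ ((n * l + wl) %/ 2).-1)%N%:Z)
   = 2 * ((q ^ n.-1)%N%:Z - lamn * (q ^ ((n + wn) %/ 2).-1)%N%:Z) %[mod l])%Z ->
  (lamn = laml * (q ^ ((n * (l - 1) + wl - wn) %/ 2))%N%:Z %[mod l])%Z.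
Proof.
move=> l_pr cop n_gt0 wn_le ev_n ev_nl.
have l_gt1 := prime_gt1 l_pr.
have al_eq := half_add_mul_split l_gt1 wn_le ev_n ev_nl.
set be := ((n + wn) %/ 2)%N in al_eq *; set al := ((n * l + wl) %/ 2)%N in al_eq *.
set E := ((n * (l - 1) + wl - wn) %/ 2)%N in al_eq *.
have be_gt0 : (0 < be)%N.
  by have := odd_double_half (n + wn); rewrite (negbTE ev_n) /be; lia.
have al_gt0 : (0 < al)%N by rewrite al_eq addn_gt0 be_gt0.
have nl_gt0 : (0 < n * l)%N by rewrite muln_gt0 n_gt0 ltnW.
have chl := pchar_Fp l_pr.
have modlE (z z' : int) : (z = z' %[mod l])%Z <-> (z%:~R : 'F_l) = z'%:~R.
  have dvdE : (z == z' %[mod l])%Z = (z%:~R == z'%:~R :> 'F_l).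
    by rewrite eqz_mod_dvd (dvdz_pcharf chl) rmorphB subr_eq0.
  by split=> [/eqP | eq_zz']; [rewrite dvdE => /eqP | apply/eqP; rewrite dvdE eq_zz'].
have natr_Fl_neq0 a : coprime l a -> (a%:R : 'F_l) != 0.
  move=> cop_a; rewrite -(dvdn_pcharf chl); apply: contraL cop_a => l_dvd.
  by rewrite /coprime (gcdn_idPl l_dvd) neq_ltn l_gt1 orbT.
have [cop2 copq] : coprime l 2 /\ coprime l q by apply/andP; rewrite -coprimeMr.
have two_neq0 : (2%:~R : 'F_l) != 0 by rewrite -pmulrn natr_Fl_neq0.
set Q : 'F_l := q%:R.
have Q_neq0 : Q != 0 := natr_Fl_neq0 q copq.
have natrXQ j : ((q ^ j)%N%:Z%:~R : 'F_l) = Q ^+ j by rewrite -pmulrn natrX.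
have mulQ_pred j : (0 < j)%N -> Q * Q ^+ j.-1 = Q ^+ j by move=> ?; rewrite -exprS prednK.
have fermat : Q ^+ (n * l) = Q ^+ n.
  by rewrite -!natrX -(Fp_nat_mod l_pr (q ^ n)) -fermat_little // -expnM Fp_nat_mod.
move/modlE; rewrite !(rmorphB, rmorphM) /= !natrXQ => /(mulfI two_neq0) /(congr1 ( *%R Q)).
rewrite !mulrBr ![Q * (_ * _)]mulrCA !mulQ_pred // fermat => /addrI /oppr_inj.
rewrite al_eq addnC exprD mulrA => eqQ; apply/modlE.
by rewrite rmorphM /= natrXQ; apply: (mulIf (expf_neq0 be Q_neq0)); rewrite eqQ.
Qed.

Section LinearizedQuadraticForm.
Variables (K : finFieldType) (p k : nat).
Hypotheses (p_pr : prime p) (k_gt0 : (0 < k)%N) (pcharK : p \in [pchar K]).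

Local Notation q := (p ^ k)%N.
Local Notation V m := (Fqm K q m).
Local Notation Fq := (V 1).

Lemma q_gt1 : (1 < q)%N.
Proof. by rewrite -(expn0 p) ltn_exp2l ?prime_gt1. Qed.

Lemma expq_gt0 j : (0 < q ^ j)%N.
Proof. by rewrite expn_gt0 (ltn_trans _ q_gt1). Qed.

Lemma frobD j (x y : K) : (x + y) ^+ (q ^ j) = x ^+ (q ^ j) + y ^+ (q ^ j).
Proof.
apply: exprDn_pchar; rewrite (eq_pnat _ (pcharf_eq pcharK)) -expnM.
by rewrite pnatX pnat_id.
Qed.

Lemma frob0 j : (0 : K) ^+ (q ^ j) = 0.
Proof. by rewrite expr0n eqn0Ngt expq_gt0. Qed.

Lemma frobN j (x : K) : (- x) ^+ (q ^ j) = - x ^+ (q ^ j).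
Proof. by apply/eqP; rewrite -subr_eq0 opprK -frobD addNr frob0. Qed.

Lemma frob_sum j (I : Type) (r : seq I) (P : pred I) (F : I -> K) :
  (\sum_(i <- r | P i) F i) ^+ (q ^ j) = \sum_(i <- r | P i) F i ^+ (q ^ j).
Proof. exact: (big_morph (fun x : K => x ^+ (q ^ j)) (frobD j) (frob0 j)). Qed.

Lemma frobK i j (x : K) : x ^+ (q ^ i) ^+ (q ^ j) = x ^+ (q ^ (i + j)).
Proof. by rewrite -exprM expnD. Qed.

Lemma frobC i j (x : K) : x ^+ (q ^ i) ^+ (q ^ j) = x ^+ (q ^ j) ^+ (q ^ i).
Proof. by rewrite !frobK addnC. Qed.

Lemma frob_inj j : injective (fun x : K => x ^+ (q ^ j)).
Proof.
move=> x y /= eq_xy; apply/eqP; rewrite -subr_eq0.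
have : (x - y) ^+ (q ^ j) == 0 by rewrite frobD frobN eq_xy subrr.
by rewrite expf_eq0 expq_gt0.
Qed.

Lemma inFqm m x : (x \in V m) = (x ^+ (q ^ m) == x).
Proof. by rewrite inE. Qed.

Lemma Fq_frob j t : t \in Fq -> t ^+ (q ^ j) = t.
Proof.
rewrite inFqm expn1 => /eqP t_q.
by elim: j => [|j IHj]; rewrite ?expn0 ?expr1 // expnSr exprM IHj.
Qed.

Lemma Fqm_frob_mul m j x : x \in V m -> x ^+ (q ^ (m * j)) = x.
Proof.
rewrite inFqm => /eqP x_qm.
by elim: j => [|j IHj]; rewrite ?muln0 ?expn0 ?expr1 // mulnS expnD exprM x_qm.
Qed.

Lemma Fqm_mul m j x : x \in V m -> x \in V (m * j).
Proof. by move=> xV; rewrite inFqm Fqm_frob_mul. Qed.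

Lemma Fq_Fqm m t : t \in Fq -> t \in V m.
Proof. by move=> tFq; rewrite inFqm Fq_frob. Qed.

Lemma Fqm0 m : (0 : K) \in V m.
Proof. by rewrite inFqm frob0. Qed.

Lemma Fqm1 m : (1 : K) \in V m.
Proof. by rewrite inFqm expr1n. Qed.

Lemma FqmD m x y : x \in V m -> y \in V m -> x + y \in V m.
Proof. by rewrite !inFqm frobD => /eqP-> /eqP->. Qed.

Lemma FqmN m x : x \in V m -> - x \in V m.
Proof. by rewrite !inFqm frobN => /eqP->. Qed.

Lemma FqmB m x y : x \in V m -> y \in V m -> x - y \in V m.
Proof. by move=> xV yV; rewrite FqmD ?FqmN. Qed.

Lemma FqmM m x y : x \in V m -> y \in V m -> x * y \in V m.
Proof. by rewrite !inFqm exprMn => /eqP-> /eqP->. Qed.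

Lemma FqmV m x : x \in V m -> x^-1 \in V m.
Proof. by rewrite !inFqm exprVn => /eqP->. Qed.

Lemma Fqm_nat m j : (j%:R : K) \in V m.
Proof. by elim: j => [|j IHj]; rewrite ?Fqm0 // -addn1 natrD FqmD ?Fqm1. Qed.

Lemma Fqm_frob m j x : x \in V m -> x ^+ (q ^ j) \in V m.
Proof. by rewrite !inFqm frobC => /eqP->. Qed.

Variable c : seq K.
Hypothesis c_Fq : forall i, (i < size c)%N -> c`_i ^+ q = c`_i.

Local Notation L := (linpoly q c).
Local Notation Q m := (Qm q c m).

Lemma coef_Fq i : c`_i \in Fq.
Proof.
case: (ltnP i (size c)) => [i_lt|i_ge]; first by rewrite inFqm expn1 c_Fq.
by rewrite nth_default ?Fqm0.
Qed.

Lemma linpolyD x y : L (x + y) = L x + L y.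
Proof. by rewrite /linpoly -big_split; apply: eq_bigr => i _; rewrite frobD mulrDr. Qed.

Lemma linpolyZ t x : t \in Fq -> L (t * x) = t * L x.
Proof.
move=> tFq; rewrite /linpoly mulr_sumr; apply: eq_bigr => i _.
by rewrite exprMn (Fq_frob _ tFq) mulrCA.
Qed.

Lemma linpoly_frob j x : L x ^+ (q ^ j) = L (x ^+ (q ^ j)).
Proof.
rewrite /linpoly frob_sum; apply: eq_bigr => i _.
by rewrite exprMn (Fq_frob _ (coef_Fq _)) frobC.
Qed.

Lemma linpoly_Fqm m x : x \in V m -> L x \in V m.
Proof. by rewrite !inFqm linpoly_frob => /eqP->. Qed.

Definition trq m (y : K) : K := \sum_(i < m) y ^+ (q ^ i).

Lemma trqD m y z : trq m (y + z) = trq m y + trq m z.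
Proof. by rewrite /trq -big_split; apply: eq_bigr => i _; rewrite frobD. Qed.

Lemma trqZ m t y : t \in Fq -> trq m (t * y) = t * trq m y.
Proof.
move=> tFq; rewrite /trq mulr_sumr; apply: eq_bigr => i _.
by rewrite exprMn (Fq_frob _ tFq).
Qed.

Lemma trq_frob m j y : trq m y ^+ (q ^ j) = trq m (y ^+ (q ^ j)).
Proof. by rewrite /trq frob_sum; apply: eq_bigr => i _; rewrite frobC. Qed.

(* The Frobenius permutes the summands of the trace cyclically. *)
Lemma trq_Fq m y : y \in V m -> trq m y \in Fq.
Proof.
move=> yV; rewrite inFqm -[q in _ ^+ q]expn1 trq_frob expn1; apply/eqP.
case: m yV => [|m] yV; first by rewrite /trq !big_ord0.
rewrite /trq big_ord_recr big_ord_recl /= addrC; congr (_ + _).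
  by rewrite -exprM -expnS; move: yV; rewrite inFqm => /eqP->; rewrite expn0 expr1.
by apply: eq_bigr => i _; rewrite -exprM -expnS.
Qed.

Lemma trq_mul m j y : y \in V m -> trq (m * j) y = j%:R * trq m y.
Proof.
move=> yV; elim: j => [|j IHj]; first by rewrite muln0 /trq big_ord0 mul0r.
rewrite mulnS /trq big_split_ord /= -/(trq m y).
have -> : \sum_(i < m * j) y ^+ (q ^ (m + i)) = trq (m * j) y.
  by apply: eq_bigr => i _; rewrite expnD exprM; move: yV; rewrite inFqm => /eqP->.
by rewrite IHj -addn1 natrD mulrDl mul1r addrC.
Qed.

Lemma QmE m x : Q m x = trq m (x * L x).
Proof. by []. Qed.

Lemma Qm_Fq m x : x \in V m -> Q m x \in Fq.
Proof. by move=> xV; apply: trq_Fq; rewrite FqmM ?linpoly_Fqm. Qed.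

Lemma QmZ m t x : t \in Fq -> Q m (t * x) = t ^+ 2 * Q m x.
Proof.
move=> tFq; rewrite !QmE linpolyZ // -trqZ ?FqmM //.
by congr trq; ring.
Qed.

Lemma Qm_frob m j x : Q m (x ^+ (q ^ j)) = Q m x ^+ (q ^ j).
Proof. by rewrite !QmE -linpoly_frob -exprMn trq_frob. Qed.

Lemma QmN m x : Q m (- x) = Q m x.
Proof. by rewrite -mulN1r QmZ ?FqmN ?Fqm1 // sqrrN expr1n mul1r. Qed.

Lemma Qm_mul m j x : x \in V m -> Q (m * j) x = j%:R * Q m x.
Proof. by move=> xV; rewrite !QmE trq_mul // FqmM ?linpoly_Fqm. Qed.

Definition polarQ m (u v : K) : K := Q m (u + v) - Q m u - Q m v.

Lemma polarQE m u v : polarQ m u v = trq m (u * L v + v * L u).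
Proof.
rewrite /polarQ !QmE linpolyD.
have -> : (u + v) * (L u + L v) = u * L u + v * L v + (u * L v + v * L u) by ring.
by rewrite !trqD; ring.
Qed.

Lemma polarQD m u v w : polarQ m u (v + w) = polarQ m u v + polarQ m u w.
Proof. by rewrite !polarQE linpolyD -trqD; congr trq; ring. Qed.

Lemma polarQZ m u t v : t \in Fq -> polarQ m u (t * v) = t * polarQ m u v.
Proof. by move=> tFq; rewrite !polarQE linpolyZ // -trqZ //; congr trq; ring. Qed.

Lemma polarQN m u v : polarQ m u (- v) = - polarQ m u v.
Proof. by rewrite -mulN1r polarQZ ?FqmN ?Fqm1 // mulN1r. Qed.

Lemma polarQ_Fq m u v : u \in V m -> v \in V m -> polarQ m u v \in Fq.
Proof. by move=> uV vV; rewrite polarQE trq_Fq // FqmD ?FqmM ?linpoly_Fqm. Qed.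

Lemma QmD_sub m u v : Q m (u + v) - Q m (u - v) = 2 * polarQ m u v.
Proof.
have -> : Q m (u - v) = polarQ m u (- v) + Q m u + Q m v by rewrite /polarQ QmN; ring.
by rewrite polarQN /polarQ; ring.
Qed.

Lemma radicalQP m u :
  (u \in radicalQ q c m) = (u \in V m) && [forall y in V m, polarQ m u y == 0].
Proof. by rewrite inE. Qed.

Variables N e : nat.
Hypothesis cardK : #|K| = ((q ^ N) ^ e)%N.

Lemma card_Fqm m : (0 < m)%N -> (m %| N)%N -> #|V m| = (q ^ m)%N.
Proof.
move=> m_gt0 /dvdnP[t N_eq]; apply: card_expr_fixed; rewrite ?cardK.
  by rewrite -(expn0 q) ltn_exp2l ?q_gt1.
have -> : ((q ^ N) ^ e = (q ^ m) ^ (t * e))%N by rewrite N_eq -!expnM; congr expn; lia.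
by rewrite dvdn_pred_predX.
Qed.

Lemma card_Fq : #|Fq| = q.
Proof. by rewrite card_Fqm ?dvd1n // expn1. Qed.

Lemma dim_radical_leq m w : (0 < m)%N -> (m %| N)%N -> is_w q c m w -> (w <= m)%N.
Proof.
move=> m_gt0 m_dvd rad_w.
have : (q ^ w <= q ^ m)%N.
  rewrite -rad_w -(card_Fqm m_gt0 m_dvd); apply: subset_leq_card.
  by apply/subsetP => x; rewrite radicalQP => /andP[].
by rewrite leq_exp2l ?q_gt1.
Qed.

Hypothesis p_odd : odd p.

Lemma two_neq0 : (2 : K) != 0.
Proof.
rewrite -(dvdn_pcharf pcharK); apply: contraL p_odd => /dvdn_leq p_le2.
by have -> : p = 2 by apply/eqP; rewrite eqn_leq p_le2 ?prime_gt1.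
Qed.

Local Notation Fqx := (Fq :\ 0).

Lemma inFqx t : (t \in Fqx) = (t != 0) && (t \in Fq).
Proof. by rewrite in_setD1. Qed.

Lemma card_Fqx : #|Fqx| = q.-1.
Proof. by have := cardsD1 0 Fq; rewrite Fqm0 card_Fq add1n => /(congr1 predn) /= <-. Qed.

Lemma Fqx1 : 1 \in Fqx.
Proof. by rewrite inFqx oner_neq0 Fqm1. Qed.

Lemma Fqx_sqrM t b : t \in Fqx -> b \in Fqx -> t ^+ 2 * b \in Fqx.
Proof.
rewrite !inFqx => /andP[t_neq0 tFq] /andP[b_neq0 bFq].
by rewrite mulf_neq0 ?expf_neq0 // FqmM // FqmM.
Qed.

Definition nsqrt_ratio (b a : K) : nat := #|[set t in Fqx | t ^+ 2 * b == a]|.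

Lemma sum_sqrM (h : K -> nat) b : b \in Fqx ->
  (\sum_(t in Fqx) h (t ^+ 2 * b)%R = \sum_(a in Fqx) h a * nsqrt_ratio b a)%N.
Proof.
move=> bFqx.
rewrite (partition_big (fun t => t ^+ 2 * b) (mem Fqx)) => [|t tFqx]; last exact: Fqx_sqrM.
apply: eq_bigr => a _; rewrite mulnC -sum_nat_const.
by apply: eq_big => t; rewrite ?inE // => /andP[_ /eqP->].
Qed.

Lemma sum_nsqrt_ratio b : b \in Fqx -> (\sum_(a in Fqx) nsqrt_ratio b a)%N = q.-1.
Proof.
move=> bFqx; have := sum_sqrM (fun _ => 1%N) bFqx.
rewrite sum_nat_const card_Fqx muln1 => ->.
by apply: eq_bigr => a _; rewrite mul1n.
Qed.

Lemma nsqrt_ratio_eq2 b a s : b \in Fqx -> s \in Fqx -> s ^+ 2 * b = a ->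
  nsqrt_ratio b a = 2.
Proof.
move=> bFqx sFqx sba.
have [b_neq0 _] : b != 0 /\ b \in Fq by apply/andP; rewrite -inFqx.
have [s_neq0 sFq] : s != 0 /\ s \in Fq by apply/andP; rewrite -inFqx.
have NsFqx : - s \in Fqx by rewrite inFqx oppr_eq0 s_neq0 FqmN.
rewrite /nsqrt_ratio (_ : [set t in Fqx | t ^+ 2 * b == a] = [set s; - s]); last first.
  apply/setP => t; rewrite in_set in_set2 -sba; apply/andP/orP.
    case=> _ /eqP /(mulIf b_neq0) /eqP; rewrite -subr_eq0 subr_sqr mulf_eq0.
    by rewrite subr_eq0 addr_eq0 => /orP.
  by case=> /eqP->; rewrite ?sqrrN.
rewrite cards2 (_ : s != - s) //; apply/eqP => s_eqN.
have : 2 * s == 0 by rewrite mulr2n mulrDl mul1r {2}s_eqN subrr.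
by rewrite mulf_eq0 (negbTE two_neq0) (negbTE s_neq0).
Qed.

Lemma nsqrt_ratio_0or2 b a : b \in Fqx -> nsqrt_ratio b a = 0 \/ nsqrt_ratio b a = 2.
Proof.
move=> bFqx; case: (eqVneq (nsqrt_ratio b a) 0) => [|]; first by left.
rewrite cards_eq0 => /set0Pn[s]; rewrite inE => /andP[sFqx /eqP sba].
by right; apply: nsqrt_ratio_eq2 sFqx sba.
Qed.

(* Squaring is two-to-one on Fq^*, so it is not onto. *)
Lemma exists_nonsquare : exists2 nu, nu \in Fqx & forall t, t \in Fq -> t ^+ 2 != nu.
Proof.
case: (pickP [pred a | (a \in Fqx) && (nsqrt_ratio 1 a == 0)]) => [a /andP[aFqx /eqP a0] | all_sq].
  exists a => // t tFq; apply/eqP => t2a.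
  have t_neq0 : t != 0 by apply: contraTneq aFqx => t0; rewrite -t2a t0 expr0n inFqx eqxx.
  move: a0 => /eqP; rewrite cards_eq0 => /eqP/setP/(_ t).
  by rewrite in_set inFqx t_neq0 tFq mulr1 t2a eqxx in_set0.
have := sum_nsqrt_ratio Fqx1.
rewrite (eq_bigr (fun _ => 2)) => [|a aFqx]; last first.
  have := all_sq a; rewrite /= aFqx /= => /negbT.
  by case: (nsqrt_ratio_0or2 a Fqx1) => ->.
by rewrite sum_nat_const card_Fqx; have := q_gt1; lia.
Qed.

Section LevelSets.
Variables (F : K -> K) (m : nat).
Hypotheses (F_Fq : forall x, x \in V m -> F x \in Fq)
  (FZ : forall t x, t \in Fq -> x \in V m -> F (t * x) = t ^+ 2 * F x).

Definition nlevel a : nat := #|[set x in V m | F x == a]|.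

Lemma nlevelZ t a : t \in Fqx -> nlevel (t ^+ 2 * a) = nlevel a.
Proof.
rewrite inFqx => /andP[t_neq0 tFq].
have tVFq : t^-1 \in Fq by apply: FqmV.
rewrite /nlevel -[RHS](card_imset _ (mulfI t_neq0)); apply: eq_card => y.
rewrite in_set; apply/andP/imsetP => [[yV /eqP Fy]|[x]].
  exists (t^-1 * y); last by rewrite mulVKf.
  by rewrite in_set FqmM ?(Fq_Fqm _ tVFq) // FZ // Fy exprVn mulKf ?expf_neq0 ?eqxx.
by rewrite in_set => /andP[xV /eqP Fx] ->; rewrite FqmM ?(Fq_Fqm _ tFq) // FZ // Fx.
Qed.

Lemma sum_nlevel : (\sum_(a in Fq) nlevel a)%N = #|V m|.
Proof.
rewrite -sum1_card [RHS](partition_big F (mem Fq)) //=.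
by apply: eq_bigr => a _; rewrite /nlevel -sum1_card; apply: eq_bigl => x; rewrite in_set.
Qed.

Lemma sum_nlevel_sqr : (\sum_(a in Fq) nlevel a ^ 2)%N =
  #|[set z : K * K | (z.1 \in V m) && ((z.2 \in V m) && (F z.1 == F z.2))]|.
Proof.
rewrite (card_dep_pairs (V m) (fun x y => (y \in V m) && (F x == F y))).
rewrite [RHS](eq_bigr (fun x => nlevel (F x))) => [|x _]; last first.
  by apply: eq_card => y; rewrite !inE [F x == _]eq_sym.
rewrite [RHS](partition_big F (mem Fq)) //=; apply: eq_bigr => a _.
rewrite (eq_bigr (fun _ => nlevel a)) => [|x /andP[_ /eqP->]] //.
rewrite sum_nat_const -mulnn; congr (_ * _)%N.
by apply: eq_card => x; rewrite in_set.
Qed.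

End LevelSets.

(* A nonzero linear form takes every value of Fq equally often. *)
Lemma card_polar_kernel m u : (0 < m)%N -> (m %| N)%N -> u \in V m ->
  u \notin radicalQ q c m -> #|[set v | (v \in V m) && (polarQ m u v == 0)]| = (q ^ m.-1)%N.
Proof.
move=> m_gt0 m_dvd uV; rewrite radicalQP uV /= => /forall_inPn[y yV Buy_neq0].
set B := polarQ m u.
have B_Fq x : x \in V m -> B x \in Fq by apply: polarQ_Fq.
have fibre_eq a : a \in Fq -> nlevel B m a = nlevel B m 0.
  move=> aFq; set v0 := a / B y * y.
  have v0V : v0 \in V m by rewrite FqmM // Fq_Fqm // FqmM // FqmV // B_Fq.
  have Bv0 : B v0 = a by rewrite /B polarQZ ?divfK // FqmM ?FqmV ?B_Fq.
  rewrite /nlevel -[RHS](card_imset _ (addrI v0)); apply: eq_card => z; rewrite in_set.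
  apply/andP/imsetP => [[zV /eqP Bz]|[x]].
    exists (z - v0); last by rewrite addrC subrK.
    by rewrite in_set FqmB //= /B polarQD polarQN -/B Bz Bv0 subrr.
  by rewrite in_set => /andP[xV /eqP Bx] ->; rewrite FqmD // /B polarQD -/B Bx Bv0 addr0.
have := sum_nlevel B_Fq; rewrite (eq_bigr (fun _ => nlevel B m 0)) => [|a]; last exact: fibre_eq.
rewrite sum_nat_const card_Fq card_Fqm // -(prednK m_gt0) expnS prednK //.
move=> /eqP; rewrite eqn_pmul2l ?(ltnW q_gt1) // => /eqP <-.
by apply: eq_card => v; rewrite !in_set.
Qed.

(* (u, v) |-> (u + v, u - v) is a bijection as 2 is invertible,
   and Q(u + v) - Q(u - v) = 2 B(u, v). *)
Lemma card_eqQ_pairs m :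
  #|[set z : K * K | (z.1 \in V m) && ((z.2 \in V m) && (Q m z.1 == Q m z.2))]| =
  #|[set z : K * K | (z.1 \in V m) && ((z.2 \in V m) && (polarQ m z.1 z.2 == 0))]|.
Proof.
pose phi z : K * K := (z.1 + z.2, z.1 - z.2).
have half_sum (x y : K) : (x + y) / 2 + (x - y) / 2 = x by field; exact: two_neq0.
have half_diff (x y : K) : (x + y) / 2 - (x - y) / 2 = y by field; exact: two_neq0.
have phi_inj : injective phi.
  move=> [u v] [u' v'] [/= sum_eq diff_eq]; congr (_, _).
    by rewrite -(half_sum u v) -(half_sum u' v') sum_eq diff_eq.
  by rewrite -(half_diff u v) -(half_diff u' v') sum_eq diff_eq.
rewrite -[RHS](card_imset _ phi_inj); apply: eq_card => [[x y]]; rewrite in_set /=.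
apply/idP/imsetP => [/and3P[xV yV /eqP Qxy]|[[u v]]].
  have half2V : 2^-1 \in V m by rewrite FqmV ?Fqm_nat.
  exists ((x + y) / 2, (x - y) / 2); last by rewrite /phi /= half_sum half_diff.
  rewrite in_set /= (FqmM (FqmD xV yV) half2V) (FqmM (FqmB xV yV) half2V) /=.
  have := QmD_sub m ((x + y) / 2) ((x - y) / 2); rewrite half_sum half_diff Qxy subrr.
  by move/esym/eqP; rewrite mulf_eq0 (negbTE two_neq0).
rewrite in_set /= => /and3P[uV vV /eqP Buv] [-> ->].
by rewrite (FqmD uV vV) (FqmB uV vV) /= -subr_eq0 QmD_sub Buv mulr0.
Qed.

Lemma sum_nlevel_Qm_sqr m w : (0 < m)%N -> (m %| N)%N -> is_w q c m w ->
  (\sum_(a in Fq) nlevel (Q m) m a ^ 2)%N =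
  (q ^ w * q ^ m + (q ^ m - q ^ w) * q ^ m.-1)%N.
Proof.
move=> m_gt0 m_dvd rad_w.
rewrite sum_nlevel_sqr => [|x]; last exact: Qm_Fq.
rewrite card_eqQ_pairs (card_dep_pairs (V m) (fun x y => (y \in V m) && (polarQ m x y == 0))).
have rad_sub : radicalQ q c m \subset V m.
  by apply/subsetP => x; rewrite radicalQP => /andP[].
rewrite (big_setID (radicalQ q c m)) /= (setIidPr rad_sub).
rewrite (eq_bigr (fun _ => q ^ m)%N) => [|u]; last first.
  rewrite radicalQP => /andP[uV /forall_inP rad_u].
  rewrite -(card_Fqm m_gt0 m_dvd); apply: eq_card => v; rewrite in_set.
  by case vV: (v \in V m) => //=; apply: rad_u.
rewrite [X in (_ + X)%N](eq_bigr (fun _ => q ^ m.-1)%N) => [|u]; last first.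
  by rewrite in_setD => /andP[u_nrad uV]; apply: card_polar_kernel.
by rewrite !sum_nat_const cardsD (setIidPr rad_sub) card_Fqm // rad_w.
Qed.

Section SquareClasses.
Variable nu : K.
Hypotheses (nu_Fqx : nu \in Fqx) (nu_nonsq : forall t, t \in Fq -> t ^+ 2 != nu).

(* An element of Fq^* that is both a square and nu times a square would make nu a square. *)
Lemma nsqrt_ratio_1_nu_leq a : a \in Fqx -> (nsqrt_ratio 1%R a + nsqrt_ratio nu a <= 2)%N.
Proof.
move=> aFqx; case: (nsqrt_ratio_0or2 a Fqx1) => e1; case: (nsqrt_ratio_0or2 a nu_Fqx) => e2;
  rewrite e1 e2 //.
have /set0Pn[s] : [set t in Fqx | t ^+ 2 * 1 == a] != set0.
  by rewrite -card_gt0 -/(nsqrt_ratio _ _) e1.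
rewrite in_set mulr1 => /andP[sFqx /eqP sa].
have /set0Pn[r] : [set t in Fqx | t ^+ 2 * nu == a] != set0.
  by rewrite -card_gt0 -/(nsqrt_ratio _ _) e2.
rewrite in_set => /andP[rFqx /eqP rnu].
have [[r_neq0 rFq] [_ sFq]] : (r != 0 /\ r \in Fq) /\ (s != 0 /\ s \in Fq).
  by split; apply/andP; rewrite -inFqx.
have := nu_nonsq (FqmM sFq (FqmV rFq)); rewrite expr_div_n sa -rnu.
by rewrite mulrC mulKf ?expf_neq0 ?eqxx.
Qed.

Lemma nsqrt_ratio_1_nu a : a \in Fqx -> (nsqrt_ratio 1%R a + nsqrt_ratio nu a)%N = 2.
Proof.
have tot : (\sum_(b in Fqx) (nsqrt_ratio 1%R b + nsqrt_ratio nu b) = \sum_(b in Fqx) 2)%N.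
  by rewrite big_split /= !sum_nsqrt_ratio ?Fqx1 // sum_nat_const card_Fqx; lia.
have : (\sum_(b in Fqx) (2 - (nsqrt_ratio 1%R b + nsqrt_ratio nu b)) == 0)%N.
  by rewrite sumnB ?tot ?subnn // => b; apply: nsqrt_ratio_1_nu_leq.
rewrite sum_nat_eq0 => /forall_inP/(_ a) le0 aFqx.
by have := nsqrt_ratio_1_nu_leq aFqx; have := le0 aFqx; lia.
Qed.

(* Fq^* is the disjoint union of the square classes of 1 and nu, each of size (q - 1) / 2. *)
Lemma sum_Fqx_sqr_classes (h : K -> nat) :
  (forall t a, t \in Fqx -> a \in Fqx -> h (t ^+ 2 * a) = h a) ->
  (2 * \sum_(a in Fqx) h a = q.-1 * (h 1%R + h nu))%N.
Proof.
move=> hZ; have sum1 := sum_sqrM h Fqx1; have sumnu := sum_sqrM h nu_Fqx.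
rewrite (eq_bigr (fun t => h 1%R)) in sum1 => [|t tFqx]; last by rewrite hZ ?Fqx1.
rewrite (eq_bigr (fun t => h nu)) in sumnu => [|t tFqx]; last by rewrite hZ.
rewrite !sum_nat_const card_Fqx in sum1 sumnu.
rewrite mulnDr sum1 sumnu -big_split /= mulnC big_distrl /=.
by apply: eq_bigr => a aFqx; rewrite -mulnDr nsqrt_ratio_1_nu.
Qed.

Lemma sum_Fq_sqr_classes (h : K -> nat) :
  (forall t a, t \in Fqx -> a \in Fqx -> h (t ^+ 2 * a) = h a) ->
  (2 * \sum_(a in Fq) h a = 2 * h 0%R + q.-1 * (h 1%R + h nu))%N.
Proof.
move=> hZ; rewrite -sum_Fqx_sqr_classes // -mulnDr (bigD1 0) ?Fqm0 //=.
by congr (2 * (_ + _))%N; apply: eq_bigl => a; rewrite inFqx andbC.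
Qed.

Lemma nlevel_units (F : K -> K) m (lam Y : int) :
  (0 < m)%N -> (m %| N)%N ->
  (forall x, x \in V m -> F x \in Fq) ->
  (forall t x, t \in Fq -> x \in V m -> F (t * x) = t ^+ 2 * F x) ->
  (nlevel F m 0)%:Z = (q ^ m.-1)%N%:Z + lam * (q.-1)%:Z * Y ->
  (nlevel F m 1)%:Z + (nlevel F m nu)%:Z = 2 * ((q ^ m.-1)%N%:Z - lam * Y).
Proof.
move=> m_gt0 m_dvd F_Fq FZ zeros.
have q1_neq0 : (q.-1)%:Z != 0 by have := q_gt1; lia.
have := sum_Fq_sqr_classes (fun t a tFqx _ => nlevelZ FZ a tFqx).
rewrite sum_nlevel // card_Fqm // -(prednK m_gt0) expnS prednK //.
move=> /(congr1 Posz); rewrite !(PoszD, PoszM) zeros => sums.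
have qE : q%:Z = (q.-1)%:Z + 1 by have := q_gt1; lia.
apply: (mulfI q1_neq0); apply/eqP.
rewrite -(inj_eq (addrI (2 * ((q ^ m.-1)%N%:Z + lam * (q.-1)%:Z * Y)))) -sums qE.
by apply/eqP; ring.
Qed.

Lemma sqr_nlevel_Qm_units m w : (0 < m)%N -> (m %| N)%N -> is_w q c m w ->
  let cnt a := (nlevel (Q m) m a)%:Z in
  2 * cnt 0 ^+ 2 + (q%:Z - 1) * (cnt 1 ^+ 2 + cnt nu ^+ 2) =
    2 * ((q ^ w)%N%:Z * (q%:Z * (q ^ m.-1)%N%:Z)
         + (q%:Z * (q ^ m.-1)%N%:Z - (q ^ w)%N%:Z) * (q ^ m.-1)%N%:Z).
Proof.
move=> m_gt0 m_dvd rad_w cnt.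
have QZ t x : t \in Fq -> x \in V m -> Q m (t * x) = t ^+ 2 * Q m x by move=> tFq _; apply: QmZ.
have q1E : (q.-1)%:Z = q%:Z - 1 by have := q_gt1; lia.
have := sum_Fq_sqr_classes (fun t a tFqx _ => congr1 (expn^~ 2) (nlevelZ QZ a tFqx)).
rewrite (sum_nlevel_Qm_sqr m_gt0 m_dvd rad_w) -(prednK m_gt0) expnS prednK //.
move=> /(congr1 Posz); rewrite !(PoszD, PoszM) -subzn; last first.
  by rewrite -expnS prednK // leq_exp2l ?q_gt1 // (dim_radical_leq m_gt0 m_dvd rad_w).
by rewrite PoszM => ->; rewrite /cnt !expr2 q1E.
Qed.

End SquareClasses.

Lemma even_add_dim_radical m w lam : (0 < m)%N -> (m %| N)%N ->
  is_w q c m w -> is_lambda q c m w lam -> lam != 0 -> ~~ odd (m + w).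
Proof.
move=> m_gt0 m_dvd rad_w [lam_val zeros] lam_neq0.
have [nu nu_Fqx nu_nonsq] := exists_nonsquare.
have QZ t x : t \in Fq -> x \in V m -> Q m (t * x) = t ^+ 2 * Q m x by move=> tFq _; apply: QmZ.
have Q_Fq x : x \in V m -> Q m x \in Fq by apply: Qm_Fq.
pose cnt a := (nlevel (Q m) m a)%:Z.
have q1E : (q.-1)%:Z = q%:Z - 1 by have := q_gt1; lia.
have sum1 : cnt 1 + cnt nu = 2 * ((q ^ m.-1)%N%:Z - lam * (q ^ ((m + w) %/ 2).-1)%N%:Z).
  exact: (nlevel_units nu_Fqx nu_nonsq m_gt0 m_dvd Q_Fq QZ zeros).
have sum2 := sqr_nlevel_Qm_units nu_Fqx nu_nonsq m_gt0 m_dvd rad_w.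
have lam2 : lam ^+ 2 = 1 by move: lam_val lam_neq0; rewrite !inE => /or3P[] /eqP->.
have q1_neq0 : q%:Z - 1 != 0 by have := q_gt1; lia.
rewrite q1E in zeros.
have key := sqr_diff_from_moments q1_neq0 lam2 zeros sum1 sum2.
apply/negP => odd_mw; set j := ((m + w) %/ 2)%N in key.
have ZX : (q ^ w)%N%:Z * (q ^ m.-1)%N%:Z = (q ^ j.*2)%N%:Z.
  rewrite -PoszM -expnD; congr (Posz (expn _ _)).
  by have := odd_double_half (m + w); rewrite odd_mw /j -muln2 -divn2; clear -m_gt0; lia.
by move: key; rewrite ZX => /eqP; exact: (negP (sqrz_neq_odd_gap j _ q_gt1)).
Qed.

Lemma nlevel_frob_mod n l a : prime l ->
  nlevel (Q (n * l)) (n * l) a = nlevel (Q (n * l)) n a %[mod l].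
Proof.
move=> l_pr; pose f x := if x \in V (n * l) then x ^+ (q ^ n) else x.
have f_inj : injective f.
  move=> x y; rewrite /f; case xV: (x \in V (n * l)); case yV: (y \in V (n * l)) => //.
  - exact: frob_inj.
  - by move=> fx_y; rewrite -fx_y Fqm_frob in yV.
  - by move=> x_fy; rewrite x_fy Fqm_frob in xV.
have f_iter j x : iter j f x = if x \in V (n * l) then x ^+ (q ^ (n * j)) else x.
  elim: j => [|j IHj] /=; first by rewrite muln0 expn0 expr1; case: ifP.
  rewrite IHj /f; case xV: (x \in V (n * l)); last by rewrite xV.
  by rewrite Fqm_frob // frobK mulnS addnC.
rewrite /nlevel (card_fixed_mod_prime f_inj l_pr).
- congr (_ %% _)%N; apply: eq_card => x; rewrite !in_set -!inFqm /f.
  case xV: (x \in V (n * l)) => /=; last first.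
    by case xVn: (x \in V n) => //; rewrite (Fqm_mul l xVn) in xV.
  by rewrite -inFqm andbC.
- by move=> x; rewrite f_iter; case: ifP => //; rewrite inFqm => /eqP.
- move=> x; rewrite /f; case: ifP => // xV.
  by rewrite !in_set -!inFqm Fqm_frob // xV Qm_frob Fq_frob // Qm_Fq.
Qed.

Lemma nlevel_Qm_mul_zero n l : (l%:R : K) != 0 ->
  nlevel (Q (n * l)) n 0 = nzeros q c n.
Proof.
move=> l_neq0; apply: eq_card => x; rewrite !in_set -!inFqm.
by case xV: (x \in V n) => //=; rewrite Qm_mul // mulf_eq0 (negbTE l_neq0).
Qed.

Lemma nlevel_units_congr n l wn wl lamn laml :
  N = (n * l)%N -> (0 < n)%N -> prime l -> (l%:R : K) != 0 ->
  is_lambda q c n wn lamn -> is_lambda q c (n * l) wl laml ->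
  (2 * ((q ^ (n * l).-1)%N%:Z - laml * (q ^ ((n * l + wl) %/ 2).-1)%N%:Z)
   = 2 * ((q ^ n.-1)%N%:Z - lamn * (q ^ ((n + wn) %/ 2).-1)%N%:Z) %[mod l])%Z.
Proof.
move=> N_nl n_gt0 l_pr l_neq0 [_ zeros_n] [_ zeros_nl].
have [nu nu_Fqx nu_nonsq] := exists_nonsquare.
have F_Fqn x : x \in V n -> Q (n * l) x \in Fq by move=> xV; apply/Qm_Fq/Fqm_mul.
have F_Fqnl x : x \in V (n * l) -> Q (n * l) x \in Fq by apply: Qm_Fq.
have FZ m t x : t \in Fq -> x \in V m -> Q (n * l) (t * x) = t ^+ 2 * Q (n * l) x.
  by move=> tFq _; apply: QmZ.
have nl_gt0 : (0 < n * l)%N by rewrite muln_gt0 n_gt0 prime_gt0.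
rewrite -(nlevel_units nu_Fqx nu_nonsq nl_gt0 _ F_Fqnl (FZ _) zeros_nl) ?N_nl //.
rewrite -(nlevel_Qm_mul_zero n l_neq0) in zeros_n.
rewrite -(nlevel_units nu_Fqx nu_nonsq n_gt0 _ F_Fqn (FZ _) zeros_n) ?N_nl ?dvdn_mulr //.
by rewrite -!PoszD !modz_nat -modnDm !nlevel_frob_mod // modnDm.
Qed.

Lemma lambda_mod_congr n l wn wl lamn laml :
  N = (n * l)%N -> (0 < n)%N -> prime l -> coprime l (2 * p) ->
  is_w q c n wn -> is_w q c (n * l) wl ->
  is_lambda q c n wn lamn -> is_lambda q c (n * l) wl laml ->
  lamn != 0 -> laml != 0 ->
  (lamn = laml * (q ^ ((n * (l - 1) + wl - wn) %/ 2))%N%:Z %[mod l])%Z.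
Proof.
move=> N_nl n_gt0 l_pr l_cop rad_n rad_nl lam_n lam_nl lamn_neq0 laml_neq0.
have [cop2 copp] : coprime l 2 /\ coprime l p by apply/andP; rewrite -coprimeMr.
have l_neq0 : (l%:R : K) != 0.
  by rewrite -(dvdn_pcharf pcharK) -prime_coprime // coprime_sym.
have n_dvd : (n %| N)%N by rewrite N_nl dvdn_mulr.
have nl_gt0 : (0 < n * l)%N by rewrite muln_gt0 n_gt0 prime_gt0.
apply: (congr_lambda_of_counts l_pr _ n_gt0).
- by rewrite coprimeMr cop2 coprimeXr.
- exact: dim_radical_leq n_gt0 n_dvd rad_n.
- exact: even_add_dim_radical n_gt0 n_dvd rad_n lam_n lamn_neq0.
- by apply: even_add_dim_radical nl_gt0 _ rad_nl lam_nl laml_neq0; rewrite N_nl.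
- exact: nlevel_units_congr N_nl n_gt0 l_pr l_neq0 lam_n lam_nl.
Qed.

End LinearizedQuadraticForm.

Theorem mainTheorem3 (K : finFieldType) (p k : nat) (c : seq K)
    (n l wn wnl : nat) (lamn lamnl : int) :
  prime p -> odd p -> (0 < k)%N -> p \in [pchar K] ->
  (exists e : nat, #|K| = ((p ^ k) ^ (n * l)) ^ e)%N ->
  (forall i, (i < size c)%N -> c`_i ^+ (p ^ k) = c`_i) ->
  (1 <= n)%N -> prime l -> coprime l (2 * p) ->
  is_w (p ^ k) c n wn -> is_w (p ^ k) c (n * l) wnl ->
  is_lambda (p ^ k) c n wn lamn -> is_lambda (p ^ k) c (n * l) wnl lamnl ->
  lamn != 0 -> lamnl != 0 ->
  (lamn = lamnl * ((p ^ k) ^ ((n * (l - 1) + wnl - wn) %/ 2))%N%:Z %[mod l%:Z])%Z.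
Proof.
move=> p_pr p_odd k_gt0 pcharK [e cardK] c_Fq.
exact: (lambda_mod_congr p_pr k_gt0 pcharK c_Fq cardK p_odd (erefl (n * l)%N)).
Qed.
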